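(* Let $(x_1,\dots,x_n)\in[c]^n$ be any token sequence. Suppose $\mathcal V=\{\boldsymbol v_k\}_{k=1}^n\in(\mathbb R^d)^n$ is a good sequence converging to $\mathcal Z=\{\boldsymbol z_x\}_{x\in[c]}$ with parameter $\gamma$, and $\boldsymbol A=\{a_{k,j}\}_{k,j\in[n]}$ is a nice attention map with parameter $\psi$ that reflects a function $f:[c]\to[c]$ in the sense that for all $k,j\in[n]$, $a_{k,j}>0$ implies $x_j=f(x_k)$. Then $\boldsymbol A\mathcal V$ is a good sequence converging to $\mathcal Z'=\{\boldsymbol z_{f(x)}\}_{x\in[c]}$ with parameter $2\gamma\psi+c(\gamma+2N)$, where $N=\max_{x\in[c]}\|\boldsymbol z_x\|$.
   Context: Good sequence (relative to the token sequence): $\{\boldsymbol u_k\}_{k=1}^n\subset\mathbb R^d$ is a good sequence converging to $\{\boldsymbol z_x\}_{x\in[c]}$ with parameter $\gamma>0$ if $\|\boldsymbol u_k-\boldsymbol z_{x_k}\|\le\gamma/\sqrt k$ for all $k\in[n]$ (Euclidean norm). Attention map: $\boldsymbol A\in\mathbb R_{\ge0}^{n\times n}$ with $a_{k,j}=0$ for $j>k$ and $\sum_{j=1}^ka_{k,j}=1$ for all $k$; nice with parameter $\psi>0$ if $\sum_{i=1}^ja_{k,i}\le\psi j/k$ for all $k\in[n]$, $j\in[k]$. $\boldsymbol A\mathcal V=\{\sum_{j=1}^na_{k,j}\boldsymbol v_j\}_{k=1}^n$. *)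

From HB Require Import structures.
From mathcomp Require Import all_boot all_order all_algebra.
Set Implicit Arguments. Unset Strict Implicit. Unset Printing Implicit Defensive.
Import Order.TTheory GRing.Theory Num.Theory.
Local Open Scope ring_scope.

Definition enorm (R : rcfType) (d : nat) (v : 'rV[R]_d) : R :=
  Num.sqrt (\sum_(i < d) v 0 i ^+ 2).

(* Indices k in [n] are represented by k : 'I_n, with paper index k+1. *)
Definition good_seq (R : rcfType) (n c d : nat) (x : 'I_n -> 'I_c)
  (u : 'I_n -> 'rV[R]_d) (z : 'I_c -> 'rV[R]_d) (gamma : R) : Prop :=
  forall k : 'I_n, enorm (u k - z (x k)) <= gamma / Num.sqrt (k.+1)%:R.

Definition attention_map (R : rcfType) (n : nat) (A : 'M[R]_n) : Prop :=
  (forall k j : 'I_n, 0 <= A k j) /\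
  (forall k j : 'I_n, (k < j)%N -> A k j = 0) /\
  (forall k : 'I_n, \sum_(j < n | (j <= k)%N) A k j = 1).

Definition nice (R : rcfType) (n : nat) (A : 'M[R]_n) (psi : R) : Prop :=
  forall k j : 'I_n, (j <= k)%N ->
    \sum_(i < n | (i <= j)%N) A k i <= psi * (j.+1)%:R / (k.+1)%:R.

Definition attn_apply (R : rcfType) (n d : nat) (A : 'M[R]_n)
  (v : 'I_n -> 'rV[R]_d) : 'I_n -> 'rV[R]_d :=
  fun k => \sum_(j < n) A k j *: v j.

Definition maxnorm (R : rcfType) (c d : nat) (z : 'I_c -> 'rV[R]_d) : R :=
  \big[Num.max/0]_(y < c) enorm (z y).

(* The error of [AV] at position k is an A-weighted average of the errors of
   [V] at the positions j <= k attended to, because [x_j = f x_k] there and the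
   rows of A sum to 1.  These errors are bounded by [gamma / sqrt j], a
   decreasing weight, so by Abel summation the niceness bound on the partial
   row sums lets us replace the row of A by the uniform row [psi / k]; then
   [sum_(j <= k) 1 / sqrt j <= 2 sqrt k] gives the parameter [2 gamma psi]. *)
From HB Require Import structures.
From mathcomp Require Import all_boot all_order all_algebra.
From mathcomp Require Import ring lra.
Set Implicit Arguments. Unset Strict Implicit. Unset Printing Implicit Defensive.
Import Order.TTheory GRing.Theory Num.Theory.
Local Open Scope ring_scope.

Lemma cauchy_schwarz_sum (R : realDomainType) d (u w : 'I_d -> R) :
  (\sum_i u i * w i) ^+ 2 <= (\sum_i u i ^+ 2) * (\sum_i w i ^+ 2).
Proof.
set P := \sum_i u i ^+ 2; set Q := \sum_i w i ^+ 2; set S := \sum_i u i * w i.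
(* Lagrange's identity *)
have inner i : \sum_j (u i * w j - u j * w i) ^+ 2
    = u i ^+ 2 * Q + w i ^+ 2 * P - 2 * (u i * w i) * S.
  rewrite /P /Q /S !mulr_sumr -big_split -sumrB /=.
  by apply: eq_bigr => j _; ring.
have lagrange : \sum_i \sum_j (u i * w j - u j * w i) ^+ 2 = 2 * (P * Q - S ^+ 2).
  under eq_bigr => i _ do rewrite inner.
  rewrite sumrB big_split /= -!mulr_suml -mulr_sumr -/P -/Q -/S; ring.
have : 0 <= \sum_i \sum_j (u i * w j - u j * w i) ^+ 2.
  by apply: sumr_ge0 => i _; apply: sumr_ge0 => j _; apply: sqr_ge0.
rewrite lagrange; lra.
Qed.

Section EuclideanNorm.
Variables (R : rcfType) (d : nat).
Implicit Types (u w : 'rV[R]_d).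

Lemma enormD u w : enorm (u + w) <= enorm u + enorm w.
Proof.
rewrite /enorm.
set P := \sum_i u 0 i ^+ 2; set Q := \sum_i w 0 i ^+ 2.
set S := \sum_i u 0 i * w 0 i.
have P0 : 0 <= P by apply: sumr_ge0 => i _; apply: sqr_ge0.
have Q0 : 0 <= Q by apply: sumr_ge0 => i _; apply: sqr_ge0.
have -> : \sum_i (u + w) 0 i ^+ 2 = P + 2 * S + Q.
  rewrite /P /Q /S mulr_sumr -!big_split /=.
  by apply: eq_bigr => i _; rewrite mxE; ring.
have SPQ : S <= Num.sqrt P * Num.sqrt Q.
  rewrite -sqrtrM // (le_trans (ler_norm S)) // -sqrtr_sqr ler_sqrt.
    exact: cauchy_schwarz_sum.
  exact: mulr_ge0.
have PQ0 : 0 <= Num.sqrt P + Num.sqrt Q by rewrite addr_ge0 ?sqrtr_ge0.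
rewrite -(ger0_norm PQ0) -sqrtr_sqr ler_sqrt ?sqr_ge0 //.
rewrite sqrrD !sqr_sqrtr //; lra.
Qed.

Lemma enormZ (a : R) u : enorm (a *: u) = `|a| * enorm u.
Proof.
rewrite /enorm -sqrtr_sqr -sqrtrM ?sqr_ge0 // mulr_sumr.
by congr Num.sqrt; apply: eq_bigr => i _; rewrite mxE; ring.
Qed.

Lemma enorm0 : enorm (0 : 'rV[R]_d) = 0.
Proof. by rewrite -(scale0r 0) enormZ normr0 mul0r. Qed.

Lemma enorm_sum (I : Type) (r : seq I) (P : pred I) (F : I -> 'rV[R]_d) :
  enorm (\sum_(i <- r | P i) F i) <= \sum_(i <- r | P i) enorm (F i).
Proof.
apply: (big_ind2 (fun u a => enorm u <= a)) => // [|u1 a1 u2 a2 le1 le2].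
- by rewrite enorm0.
- exact: le_trans (enormD _ _) (lerD le1 le2).
Qed.

End EuclideanNorm.

Lemma maxnorm_ge0 (R : rcfType) c d (z : 'I_c -> 'rV[R]_d) : 0 <= maxnorm z.
Proof. by rewrite /maxnorm; elim/big_rec: _ => // i y _ y0; rewrite le_max y0 orbT. Qed.

(* Abel summation. *)
Lemma ler_sum_mul_of_partial_sums (R : numDomainType) (a b w : nat -> R) m :
  (forall i j, (i <= j <= m)%N -> w j <= w i) -> 0 <= w m ->
  (forall i, (i <= m)%N -> \sum_(j < i.+1) a j <= \sum_(j < i.+1) b j) ->
  \sum_(j < m.+1) a j * w j <= \sum_(j < m.+1) b j * w j.
Proof.
elim: m w => [|m IH] w w_decr wm_ge0 ab.
  by rewrite !big_ord1 ler_wpM2r //; have := ab 0%N (leqnn 0); rewrite !big_ord1.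
pose c := w m.+1.
have split_last (e : nat -> R) : \sum_(j < m.+2) e j * w j
    = \sum_(j < m.+1) e j * (w j - c) + c * \sum_(j < m.+2) e j.
  have -> : \sum_(j < m.+1) e j * (w j - c)
      = \sum_(j < m.+1) e j * w j - c * \sum_(j < m.+1) e j.
    by rewrite mulr_sumr -sumrB; apply: eq_bigr => j _; ring.
  by rewrite big_ord_recr [\sum_(j < m.+2) e j]big_ord_recr /c /=; ring.
rewrite !split_last; apply: lerD.
  apply: (IH (fun j => w j - c)).
  - by move=> i j /andP[ij jm]; rewrite lerD2r w_decr // ij (leqW jm).
  - by rewrite subr_ge0 /c w_decr // leqnSn leqnn.
  - by move=> i im; rewrite ab // (leqW im).
by rewrite ler_wpM2l // ab.
Qed.

Lemma sum_inv_sqrt_le (R : rcfType) k :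
  \sum_(j < k.+1) (Num.sqrt (j.+1)%:R)^-1 <= 2 * Num.sqrt (k.+1)%:R :> R.
Proof.
elim: k => [|k IH]; first by rewrite big_ord1 sqrtr1 invr1; lra.
rewrite big_ord_recr /=.
set s := Num.sqrt (k.+2)%:R : R; set t := Num.sqrt (k.+1)%:R : R.
have s_gt0 : 0 < s by rewrite sqrtr_gt0 ltr0n.
have t_ge0 : 0 <= t by rewrite sqrtr_ge0.
have st : s ^+ 2 = t ^+ 2 + 1 by rewrite !sqr_sqrtr ?ler0n // -natr1.
(* 1 / s <= 2 (s - t)  <=>  1 <= 2 s (s - t) = (s - t)^2 + s^2 - t^2 *)
have step : s^-1 <= 2 * (s - t).
  rewrite -(ler_pM2l s_gt0) mulfV ?gt_eqF //; have := sqr_ge0 (s - t); nra.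
move: IH; rewrite -/t; lra.
Qed.

Section AttentionMap.
Variables (R : rcfType) (n : nat) (A : 'M[R]_n).
Hypothesis A_attn : attention_map A.

Lemma attention_row_sum (k : 'I_n) : \sum_(j < n) A k j = 1.
Proof.
have [_ [A_tri A_row]] := A_attn.
rewrite (bigID (fun j : 'I_n => (j <= k)%N)) /= A_row big1 ?addr0 // => j.
by rewrite -ltnNge => /A_tri.
Qed.

Lemma attn_apply_subr d c (x : 'I_n -> 'I_c) (f : 'I_c -> 'I_c)
    (v : 'I_n -> 'rV[R]_d) (z : 'I_c -> 'rV[R]_d) (k : 'I_n) :
  (forall j, 0 < A k j -> x j = f (x k)) ->
  attn_apply A v k - z (f (x k)) = \sum_j A k j *: (v j - z (x j)).
Proof.
have [A_ge0 _] := A_attn.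
move=> reflect_f; rewrite /attn_apply -[z _]scale1r -(attention_row_sum k).
rewrite scaler_suml -sumrB; apply: eq_bigr => j _; rewrite scalerBr.
have [->|Akj_neq0] := eqVneq (A k j) 0; first by rewrite !scale0r.
by rewrite (reflect_f j) // lt_def Akj_neq0 A_ge0.
Qed.

Lemma nice_row_weighted_sum_le psi (k : 'I_n) (w : nat -> R) :
  nice A psi -> (forall i j, (i <= j)%N -> w j <= w i) -> (forall j, 0 <= w j) ->
  \sum_(j < n) A k j * w j <= psi / (k.+1)%:R * \sum_(j < k.+1) w j.
Proof.
have [_ [A_tri _]] := A_attn.
move=> A_nice w_decr w_ge0.
pose a j := A k (insubd k j).
have aE (j : 'I_n) : a j = A k j by rewrite /a valKd.
have -> : \sum_(j < n) A k j * w j = \sum_(j < k.+1) a j * w j.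
  rewrite (big_ord_widen n (fun j => a j * w j) (ltn_ord k)).
  rewrite [LHS](bigID (fun j : 'I_n => (j < k.+1)%N)) /= [X in _ + X]big1 ?addr0.
    by apply: eq_bigr => j _; rewrite aE.
  by move=> j; rewrite -leqNgt => /A_tri ->; rewrite mul0r.
rewrite mulr_sumr.
apply: (ler_sum_mul_of_partial_sums (b := fun=> psi / (k.+1)%:R)) => //.
  by move=> i j /andP[ij _]; apply: w_decr.
move=> i ik; have iln : (i < n)%N := leq_ltn_trans ik (ltn_ord k).
rewrite sumr_const card_ord -[_ *+ _]mulr_natr mulrAC.
apply: le_trans (A_nice k (Ordinal iln) ik).
rewrite (big_ord_widen n a iln); under eq_bigr => j _ do rewrite aE; exact: lexx.
Qed.

End AttentionMap.

Lemma good_seq_le (R : rcfType) n c d (x : 'I_n -> 'I_c) (u : 'I_n -> 'rV[R]_d)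
    (z : 'I_c -> 'rV[R]_d) (gamma gamma' : R) :
  gamma <= gamma' -> good_seq x u z gamma -> good_seq x u z gamma'.
Proof.
move=> le_gamma u_good k; apply: le_trans (u_good k) _.
by rewrite ler_wpM2r // invr_ge0 sqrtr_ge0.
Qed.

Lemma good_seq_attn_apply (R : rcfType) n c d (x : 'I_n -> 'I_c)
    (v : 'I_n -> 'rV[R]_d) (z : 'I_c -> 'rV[R]_d) (gamma psi : R)
    (A : 'M[R]_n) (f : 'I_c -> 'I_c) :
  0 <= gamma -> 0 <= psi -> good_seq x v z gamma ->
  attention_map A -> nice A psi ->
  (forall k j, 0 < A k j -> x j = f (x k)) ->
  good_seq x (attn_apply A v) (fun y => z (f y)) (2 * gamma * psi).
Proof.
move=> gamma_ge0 psi_ge0 v_good A_attn A_nice reflect_f k.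
have [A_ge0 _] := A_attn.
pose w j : R := (Num.sqrt (j.+1)%:R)^-1.
have w_decr i j : (i <= j)%N -> w j <= w i.
  by move=> ij; rewrite lef_pV2 ?posrE ?sqrtr_gt0 ?ltr0n // ler_sqrt ?ler0n // ler_nat.
have w_ge0 j : 0 <= w j by rewrite invr_ge0 sqrtr_ge0.
rewrite (attn_apply_subr A_attn v z (reflect_f k)); apply: le_trans (enorm_sum _ _ _) _.
have -> : 2 * gamma * psi / Num.sqrt (k.+1)%:R
    = gamma * (psi / (k.+1)%:R * (2 * Num.sqrt (k.+1)%:R)).
  have s_gt0 : 0 < Num.sqrt (k.+1)%:R :> R by rewrite sqrtr_gt0 ltr0n.
  rewrite -{2}[(k.+1)%:R](@sqr_sqrtr R) ?ler0n //; field; exact: lt0r_neq0.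
apply: le_trans (_ : gamma * \sum_(j < n) A k j * w j <= _).
  rewrite mulr_sumr; apply: ler_sum => j _.
  by rewrite enormZ ger0_norm ?A_ge0 // mulrCA ler_wpM2l.
rewrite ler_wpM2l //.
apply: le_trans (nice_row_weighted_sum_le A_attn k A_nice w_decr w_ge0) _.
by rewrite ler_wpM2l ?sum_inv_sqrt_le // divr_ge0.
Qed.

Theorem theorem4 (R : rcfType) (n c d : nat) (x : 'I_n -> 'I_c)
  (v : 'I_n -> 'rV[R]_d) (z : 'I_c -> 'rV[R]_d) (gamma psi : R)
  (A : 'M[R]_n) (f : 'I_c -> 'I_c) :
  0 < gamma -> 0 < psi ->
  good_seq x v z gamma ->
  attention_map A -> nice A psi ->
  (forall k j : 'I_n, 0 < A k j -> x j = f (x k)) ->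
  good_seq x (attn_apply A v) (fun y => z (f y))
    (2 * gamma * psi + c%:R * (gamma + 2 * maxnorm z)).
Proof.
move=> gamma_gt0 psi_gt0 v_good A_attn A_nice reflect_f.
apply: good_seq_le (good_seq_attn_apply (ltW gamma_gt0) (ltW psi_gt0) v_good
  A_attn A_nice reflect_f).
by rewrite lerDl mulr_ge0 // addr_ge0 ?mulr_ge0 ?maxnorm_ge0 // ltW.
Qed.
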